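(* Let $c>0$ and let $\nu,\tilde\nu$ be probability measures on $\mathbb R_+$ different from $\boldsymbol d_0$. Suppose that for $i=1,2$ the triple $(\boldsymbol{\tilde\delta}_i,\boldsymbol\delta_i,\boldsymbol x_i)$ satisfies: $\boldsymbol{\tilde\delta}_i\in\widetilde{\mathcal D}$, $\boldsymbol x_i\in\mathbb R\setminus\{0\}$, $\boldsymbol\delta_i=c\int\frac{t}{-\boldsymbol x_i(1+\boldsymbol{\tilde\delta}_i t)}\nu(dt)\in\mathcal D$, $\boldsymbol{\tilde\delta}_i=\int\frac{t}{-\boldsymbol x_i(1+\boldsymbol\delta_i t)}\tilde\nu(dt)$, and $$1-\boldsymbol x_i^2\Bigl(c\int\frac{t^2}{\boldsymbol x_i^2(1+\boldsymbol{\tilde\delta}_i t)^2}\nu(dt)\Bigr)\Bigl(\int\frac{t^2}{\boldsymbol x_i^2(1+\boldsymbol\delta_i t)^2}\tilde\nu(dt)\Bigr)>0.$$ If $\boldsymbol{\tilde\delta}_1<\boldsymbol{\tilde\delta}_2$, $\boldsymbol x_1\boldsymbol x_2>0$, and $[\min(\boldsymbol\delta_1,\boldsymbol\delta_2),\max(\boldsymbol\delta_1,\boldsymbol\delta_2)]\subset\mathcal D$, then $\boldsymbol x_1<\boldsymbol x_2$.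
   Context: $\boldsymbol d_0$ is the Dirac mass at $0$. Define $\mathcal D=\{0\}\cup\{\boldsymbol\delta\in\mathbb R\setminus\{0\}:-\boldsymbol\delta^{-1}\notin\operatorname{supp}(\tilde\nu)\}$ if $\operatorname{supp}(\tilde\nu)$ is compact and $\mathcal D=\{\boldsymbol\delta\in\mathbb R\setminus\{0\}:-\boldsymbol\delta^{-1}\notin\operatorname{supp}(\tilde\nu)\}$ otherwise; $\widetilde{\mathcal D}$ is defined in the same way with $\nu$ in place of $\tilde\nu$. *)

From HB Require Import structures.
From mathcomp Require Import all_boot all_order all_algebra.
From mathcomp Require Import all_classical all_reals all_analysis.
Set Implicit Arguments. Unset Strict Implicit. Unset Printing Implicit Defensive.
Import Order.TTheory GRing.Theory Num.Theory.
Import numFieldNormedType.Exports.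
Local Open Scope classical_set_scope.
Local Open Scope ring_scope.

Definition supp (R : realType) (mu : set R -> \bar R) : set R :=
  [set x | forall e : R, 0 < e -> (0 < mu (ball x e))%E].

(* The domain D associated to a measure mu (D uses tilde-nu, tilde-D uses nu). *)
Definition domD (R : realType) (mu : set R -> \bar R) : set R :=
  [set d | (d = 0 /\ compact (supp mu)) \/ (d != 0 /\ ~ supp mu (- d^-1))].

Definition admissible (R : realType) (c : R) (nu nut : set R -> \bar R)
  (td d x : R) : Prop :=
  [/\ domD nu td /\ x != 0,
      d%:E = (c%:E * \int[nu]_t (t / (- x * (1 + td * t)))%:E)%E /\ domD nut d,
      td%:E = (\int[nut]_t (t / (- x * (1 + d * t)))%:E)%E &
      (0 < 1 - (x ^+ 2)%:E *
         ((c%:E * \int[nu]_t (t ^+ 2 / (x ^+ 2 * (1 + td * t) ^+ 2))%:E)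
          * \int[nut]_t (t ^+ 2 / (x ^+ 2 * (1 + d * t) ^+ 2))%:E))%E].

From HB Require Import structures.
From mathcomp Require Import all_boot all_order all_algebra.
From mathcomp Require Import all_classical all_reals all_analysis.
From mathcomp Require Import measurable_realfun ring lra.
Import Order.TTheory GRing.Theory Num.Theory.
Import numFieldNormedType.Exports.
Local Open Scope classical_set_scope.
Local Open Scope ring_scope.
Set Implicit Arguments. Unset Strict Implicit. Unset Printing Implicit Defensive.

(* With P_i = int t/(1+td_i t) dnu and Q_i = int t/(1+d_i t) dnut, the fixed-point
   equations read x_i d_i = -c P_i and x_i td_i = -Q_i.  The resolvent identity
   gives P_1 - P_2 = (td_2 - td_1) A and Q_1 - Q_2 = (d_2 - d_1) B for the mixed
   second moments A, B, and eliminating P_i, Q_i yields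
     (x_2 - x_1) C = (td_2 - td_1) (x_1 x_2 - c A B),
     C = int t/((1+d_1 t)(1+d_2 t)) dnut.
   C >= 0 because no pole -1/t, t in supp nut, lies between d_1 and d_2, while
   c A B < x_1 x_2 by Cauchy-Schwarz and the two stability conditions. *)

Section real_algebra.
Variable R : realFieldType.

Lemma affine_mul_gt0 (a b t : R) :
  (forall d, Num.min a b <= d <= Num.max a b -> 1 + d * t != 0) ->
  0 < (1 + a * t) * (1 + b * t).
Proof.
move=> nz; have [->|t0] := eqVneq t 0; first by rewrite !mulr0 addr0 mulr1.
have aab : Num.min a b <= a <= Num.max a b by rewrite ge_min le_max !lexx.
have bab : Num.min a b <= b <= Num.max a b by rewrite ge_min le_max lexx !orbT.
rewrite lt_neqAle eq_sym mulf_neq0 ?nz //= leNgt; apply/negP => neg.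
have {}neg : (a + t^-1) * (b + t^-1) < 0.
  have E : (1 + a * t) * (1 + b * t) = t ^+ 2 * ((a + t^-1) * (b + t^-1)).
    by field.
  by move: neg; rewrite E pmulr_rlt0 // exprn_even_gt0.
have between : Num.min a b <= - t^-1 <= Num.max a b.
  rewrite ge_min le_max.
  case: (lerP a (- t^-1)) => ?; case: (lerP b (- t^-1)) => ?;
    by rewrite ?orbT //=; nra.
by move: (nz _ between); rewrite mulNr mulVf ?subrr ?eqxx.
Qed.

Lemma fixed_point_cross_identity (c x1 x2 td1 td2 d1 d2 P1 P2 Q1 Q2 A12 B12 : R) :
  x1 * d1 = - (c * P1) -> x2 * d2 = - (c * P2) ->
  x1 * td1 = - Q1 -> x2 * td2 = - Q2 ->
  P1 - P2 = (td2 - td1) * A12 -> Q1 - Q2 = (d2 - d1) * B12 ->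
  (x2 - x1) * (Q2 - d1 * B12) = (td2 - td1) * (x1 * x2 - c * A12 * B12).
Proof.
move=> e1 e2 f1 f2 resP resQ.
have eA : (td2 - td1) * A12 * c = x2 * d2 - x1 * d1 by rewrite -resP e1 e2; ring.
transitivity (x1 * (x2 * td2) - x2 * (x1 * td1) - B12 * ((td2 - td1) * A12 * c)).
  by rewrite eA f1 f2 -[Q1](subrK Q2) resQ; ring.
by ring.
Qed.

Lemma discriminant_le0 (F G H : R) : 0 <= H ->
  (forall s, 0 <= F + 2 * G * s + H * s ^+ 2) -> G ^+ 2 <= F * H.
Proof.
move=> H0 q; pose p : {poly R} := H *: 'X^2 + (2 * G) *: 'X + F%:P.
have sp : (size p <= 3)%N.
  rewrite (leq_trans (size_polyD _ _)) // geq_max size_polyC.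
  rewrite (leq_trans (leq_b1 _)) //.
  rewrite (leq_trans (size_polyD _ _)) // geq_max.
  by rewrite !(leq_trans (size_scale_leq _ _)) // ?size_polyXn ?size_polyX.
have p_ge0 x : 0 <= p.[x].
  suff -> : p.[x] = F + 2 * G * x + H * x ^+ 2 by exact: q.
  by rewrite /p !hornerE; ring.
have := deg_le2_poly_delta_ge0 sp _ p_ge0.
rewrite /p !coefE /= !(mulr0, mulr1, addr0, add0r) => /(_ H0).
lra.
Qed.

Lemma cross_term_lt (c x1 x2 A11 A12 A22 B11 B12 B22 : R) :
  0 < c -> 0 <= A11 -> 0 <= A22 -> 0 <= B11 -> 0 <= B22 ->
  A12 ^+ 2 <= A11 * A22 -> B12 ^+ 2 <= B11 * B22 ->
  c * A11 * B11 < x1 ^+ 2 -> c * A22 * B22 < x2 ^+ 2 -> 0 < x1 * x2 ->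
  c * A12 * B12 < x1 * x2.
Proof.
move=> c0 A11_ge0 A22_ge0 B11_ge0 B22_ge0 csA csB s1 s2 x12.
have sq : (c * A12 * B12) ^+ 2 < (x1 * x2) ^+ 2.
  apply: (@le_lt_trans _ _ ((c * A11 * B11) * (c * A22 * B22))).
    have -> : (c * A12 * B12) ^+ 2 = c ^+ 2 * (A12 ^+ 2 * B12 ^+ 2) by ring.
    have -> : c * A11 * B11 * (c * A22 * B22) =
      c ^+ 2 * ((A11 * A22) * (B11 * B22)) by ring.
    by rewrite ler_pM2l ?exprn_gt0 // ler_pM ?sqr_ge0.
  by rewrite exprMn ltr_pM // !mulr_ge0 // ltW.
nra.
Qed.

End real_algebra.

Section ess_bounded.
Context d (T : measurableType d) (R : realType) (mu : {measure set T -> \bar R}).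
Implicit Types (f g : T -> R).

Definition ess_bounded f :=
  measurable_fun setT f /\ exists K : R, {ae mu, forall t, `|f t| <= K}.

Lemma ess_bounded_cst k : ess_bounded (fun=> k).
Proof. by split; [exact: measurable_cst | exists `|k|; apply: aeW]. Qed.

Lemma ess_boundedD f g : ess_bounded f -> ess_bounded g ->
  ess_bounded (fun t => f t + g t).
Proof.
move=> [mf [K fK]] [mg [L gL]]; split; first exact: measurable_funD.
exists (K + L); apply: filterS2 fK gL => t fK gL.
by rewrite (le_trans (ler_normD _ _)) // lerD.
Qed.

Lemma ess_boundedM f g : ess_bounded f -> ess_bounded g ->
  ess_bounded (fun t => f t * g t).
Proof.
move=> [mf [K fK]] [mg [L gL]]; split; first exact: measurable_funM.
by exists (K * L); apply: filterS2 fK gL => t fK gL; rewrite normrM ler_pM.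
Qed.

Lemma ess_boundedZ k f : ess_bounded f -> ess_bounded (fun t => k * f t).
Proof. exact/ess_boundedM/ess_bounded_cst. Qed.

Lemma ess_boundedB f g : ess_bounded f -> ess_bounded g ->
  ess_bounded (fun t => f t - g t).
Proof.
move=> bf bg; have := ess_boundedD bf (ess_boundedZ (-1) bg).
by under eq_fun do rewrite mulN1r.
Qed.

Lemma ess_bounded_sqr f : ess_bounded f -> ess_bounded (fun t => f t ^+ 2).
Proof.
by move=> bf; have := ess_boundedM bf bf; under eq_fun do rewrite -expr2.
Qed.

End ess_bounded.

Section Rintegral_ess_bounded.
Context d (T : measurableType d) (R : realType).
Variable mu : {finite_measure set T -> \bar R}.
Implicit Types (f g : T -> R).

Lemma integrable_ess_bounded f :
  ess_bounded mu f -> mu.-integrable setT (EFin \o f).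
Proof.
move=> [mf [K fK]]; apply/integrableP; split; first exact/measurable_EFinP.
apply: le_lt_trans (integral_le_bound `|K|%:E _ _ _ _) _ => //.
- exact/measurable_EFinP.
- by apply: filterS fK => t fK _; rewrite lee_fin (le_trans fK) ?ler_norm.
- by rewrite lte_mul_pinfty // ltey_eq fin_num_measure.
Qed.

Lemma integral_EFin_ess_bounded f : ess_bounded mu f ->
  (\int[mu]_t (f t)%:E = (\int[mu]_t f t)%:E)%E.
Proof.
by move=> bf; rewrite fineK //; exact/integrable_fin_num/integrable_ess_bounded.
Qed.

Lemma eq_Rintegral_ae f g : measurable_fun setT f -> measurable_fun setT g ->
  {ae mu, forall t, f t = g t} -> \int[mu]_t f t = \int[mu]_t g t.
Proof.
move=> mf mg fg; congr fine.
apply: ae_eq_integral => //; try exact/measurable_EFinP.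
by apply: filterS fg => t -> _.
Qed.

Lemma Rintegral_ge0_ae f : measurable_fun setT f -> {ae mu, forall t, 0 <= f t} ->
  0 <= \int[mu]_t f t.
Proof.
move=> mf f0; rewrite (@eq_Rintegral_ae f (fun t => Num.max (f t) 0)) //.
- by apply: Rintegral_ge0 => t _; rewrite le_max lexx orbT.
- exact: measurable_maxr.
- by apply: filterS f0 => t f0; rewrite max_l.
Qed.

Lemma RintegralZl_ess_bounded k f : ess_bounded mu f ->
  \int[mu]_t (k * f t) = k * \int[mu]_t f t.
Proof. by move=> /integrable_ess_bounded; exact: RintegralZl. Qed.

Lemma RintegralD_ess_bounded f g : ess_bounded mu f -> ess_bounded mu g ->
  \int[mu]_t (f t + g t) = \int[mu]_t f t + \int[mu]_t g t.
Proof.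
by move=> /integrable_ess_bounded bf /integrable_ess_bounded; exact: RintegralD.
Qed.

Lemma RintegralB_ess_bounded f g : ess_bounded mu f -> ess_bounded mu g ->
  \int[mu]_t (f t - g t) = \int[mu]_t f t - \int[mu]_t g t.
Proof.
by move=> /integrable_ess_bounded bf /integrable_ess_bounded; exact: RintegralB.
Qed.

Lemma Rintegral_sqr_ge0 f : 0 <= \int[mu]_t (f t ^+ 2).
Proof. by apply: Rintegral_ge0 => t _; exact: sqr_ge0. Qed.

Lemma Rintegral_CauchySchwarz f g : ess_bounded mu f -> ess_bounded mu g ->
  (\int[mu]_t (f t * g t)) ^+ 2 <=
  \int[mu]_t (f t ^+ 2) * \int[mu]_t (g t ^+ 2).
Proof.
move=> bf bg; have bfg := ess_boundedM bf bg.
have [bff bgg] := (ess_bounded_sqr bf, ess_bounded_sqr bg).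
apply: discriminant_le0 => [|s]; first exact: Rintegral_sqr_ge0.
have -> : \int[mu]_t (f t ^+ 2) + 2 * \int[mu]_t (f t * g t) * s +
          \int[mu]_t (g t ^+ 2) * s ^+ 2 = \int[mu]_t ((f t + s * g t) ^+ 2).
  rewrite [in RHS](@eq_Rintegral _ _ _ mu setT (fun t => f t ^+ 2 +
      ((2 * s) * (f t * g t) + s ^+ 2 * g t ^+ 2))); last by move=> t _; ring.
  have [b1 b2] := (ess_boundedZ (2 * s) bfg, ess_boundedZ (s ^+ 2) bgg).
  have b12 := ess_boundedD b1 b2.
  rewrite !RintegralD_ess_bounded //.
  by rewrite !RintegralZl_ess_bounded //; ring.
exact: Rintegral_sqr_ge0.
Qed.
End Rintegral_ess_bounded.

Section resolvent.
Variable R : fieldType.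

Definition tfrac (a t : R) := t / (1 + a * t).

Lemma tfrac_resolvent a b t : 1 + a * t != 0 -> 1 + b * t != 0 ->
  tfrac a t - tfrac b t = (b - a) * (tfrac a t * tfrac b t).
Proof. by move=> na nb; rewrite /tfrac; field; rewrite na nb. Qed.

Lemma tfrac_cross a b t : 1 + a * t != 0 -> 1 + b * t != 0 ->
  tfrac b t - a * (tfrac a t * tfrac b t) = t / ((1 + a * t) * (1 + b * t)).
Proof. by move=> na nb; rewrite /tfrac; field; rewrite na nb. Qed.

End resolvent.

Lemma measurable_fun_invr (R : realType) : measurable_fun [set: R] GRing.inv.
Proof.
have -> : [set: R] = [set~ 0] `|` [set 0].
  by apply/seteqP; split => x //= _; case: (eqVneq x 0) => [->|/eqP]; [right|left].
apply/measurable_funU.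
- exact: measurableC (measurable_set1 _).
- exact: measurable_set1.
split; last exact: measurable_fun_set1.
apply: open_continuous_measurable_fun.
  exact: closed_openC (compact_closed (@Rhausdorff R) (@compact_set1 _ _)).
by move=> x /set_mem /eqP x0; apply: inv_continuous.
Qed.

Lemma measurable_tfrac (R : realType) (a : R) : measurable_fun setT (tfrac a).
Proof.
apply: measurable_funM; first exact: measurable_id.
change (measurable_fun setT (GRing.inv \o (fun t : R => 1 + a * t))).
apply: measurableT_comp; first exact: measurable_fun_invr.
by apply: measurable_funD; [exact: measurable_cst | exact: mulrl_measurable].
Qed.

Section support.
Context (R : realType) (mu : {measure set R -> \bar R}).

Lemma not_supp_ball x : ~ supp mu x -> exists2 e, 0 < e & mu (ball x e) = 0%E.
Proof.
move=> /existsNP[e /not_implyP[e0 /negP]]; rewrite lt0e measure_ge0 andbT negbK.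
by move/eqP; exists e.
Qed.

Lemma ae_supp : {ae mu, forall t, supp mu t}.
Proof.
pose B (q : rat * rat) : set R := ball (ratr q.1 : R) (ratr q.2).
pose F n := if unpickle n is Some q then if mu (B q) == 0%E then B q else set0
            else set0.
apply: (@negligibleS _ _ _ _ (\bigcup_n F n)); last first.
  apply: negligible_bigcup => n; rewrite /F.
  case: unpickle => [q|]; last exact: negligible_set0.
  case: eqP => [/negligibleP|_]; last exact: negligible_set0.
  by apply; exact: measurable_ball.
(* every point outside the support lies in a null ball with rational data *)
move=> x /not_supp_ball[e e0 mue].
have [q1 [q2 [xB Bx]]] := open_subball_rat (ball_open x e) (mem_set (ballxx x e0)).
exists (pickle (q1, q2)); first by [].
rewrite /F pickleK.
suff -> : mu (B (q1, q2)) == 0%E by exact/set_mem.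
by rewrite eq_le measure_ge0 andbT -mue le_measure ?inE //; exact: measurable_ball.
Qed.

Lemma supp_dist x e t : mu (ball x e) = 0%E -> supp mu t -> e <= `|x - t|.
Proof.
move=> mue st; rewrite leNgt; apply/negP => xt.
have := st (e - `|x - t|); rewrite subr_gt0 => /(_ xt).
apply/negP; rewrite -leNgt -mue.
apply: le_measure; rewrite ?inE; try exact: measurable_ball.
move=> y; rewrite -!ball_normE /= => ty.
by rewrite (le_lt_trans (ler_distD t x y)) // -ltrBrDl.
Qed.

Lemma supp_ge0 t : mu [set t : R | t < 0] = 0%E -> supp mu t -> 0 <= t.
Proof.
move=> neg0 st; rewrite leNgt; apply/negP => t0.
have := st (- t); rewrite oppr_gt0 => /(_ t0); apply/negP; rewrite -leNgt -neg0.
apply: le_measure; rewrite ?inE; first exact: measurable_ball.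
  by apply: open_measurable; exact: open_lt.
move=> s; rewrite -ball_normE /= ltr_norml opprK => /andP[+ _]; lra.
Qed.

Lemma domD_denom_ge a : domD mu a ->
  exists2 e, 0 < e & forall t, supp mu t -> e <= `|1 + a * t|.
Proof.
case=> [[-> _]|[a0 /not_supp_ball[e e0 mue]]].
  by exists 1 => // t _; rewrite mul0r addr0 normr1.
exists (`|a| * e) => [|t st]; first by rewrite mulr_gt0 ?normr_gt0.
have -> : 1 + a * t = a * (t - - a^-1) by rewrite mulrDr opprK mulfV // addrC.
by rewrite normrM ler_pM2l ?normr_gt0 // distrC supp_dist.
Qed.

Lemma domD_denom_neq0 a t : domD mu a -> supp mu t -> 1 + a * t != 0.
Proof.
by move=> /domD_denom_ge[e e0 he] st; rewrite -normr_gt0 (lt_le_trans e0) ?he.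
Qed.

Lemma tfrac_bounded a : domD mu a ->
  exists K, forall t, supp mu t -> `|tfrac a t| <= K.
Proof.
have [-> [[_ cs]|[]]|a0 da] := eqVneq a 0; last 2 first.
- by rewrite eqxx.
- have [e e0 he] := domD_denom_ge da.
  exists (`|a|^-1 * (1 + e^-1)) => t st.
  have nz := domD_denom_neq0 da st.
  have -> : tfrac a t = a^-1 * (1 - (1 + a * t)^-1).
    by rewrite /tfrac; field; rewrite nz.
  rewrite normrM normfV ler_pM2l ?invr_gt0 ?normr_gt0 //.
  rewrite (le_trans (ler_normB _ _)) // normr1 lerD2l normfV lef_pV2 ?he //.
  by rewrite posrE normr_gt0.
have [M [_ hM]] := compact_bounded cs.
exists (M + 1) => t st; rewrite /tfrac mul0r addr0 divr1.
by apply: hM st; rewrite ltrDl.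
Qed.

Lemma ess_bounded_tfrac a : domD mu a -> ess_bounded mu (tfrac a).
Proof.
move=> /tfrac_bounded[K hK]; split; first exact: measurable_tfrac.
by exists K; apply: filterS ae_supp.
Qed.

End support.

Section tfrac_integrals.
Context (R : realType) (mu : {finite_measure set R -> \bar R}).

Lemma Rintegral_tfrac_resolvent a b : domD mu a -> domD mu b ->
  \int[mu]_t tfrac a t - \int[mu]_t tfrac b t =
  (b - a) * \int[mu]_t (tfrac a t * tfrac b t).
Proof.
move=> da db; have [ba bb] := (ess_bounded_tfrac da, ess_bounded_tfrac db).
have bab := ess_boundedM ba bb.
rewrite -RintegralB_ess_bounded // -RintegralZl_ess_bounded //.
apply: eq_Rintegral_ae.
- exact: (ess_boundedB ba bb).1.
- exact: (ess_boundedZ _ bab).1.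
apply: filterS (ae_supp mu) => t st.
by rewrite tfrac_resolvent ?(domD_denom_neq0 da st) ?(domD_denom_neq0 db st).
Qed.

Lemma Rintegral_tfrac_cross_ge0 a b : mu [set t : R | t < 0] = 0%E ->
  (forall d, Num.min a b <= d <= Num.max a b -> domD mu d) ->
  0 <= \int[mu]_t tfrac b t - a * \int[mu]_t (tfrac a t * tfrac b t).
Proof.
move=> neg0 dab.
have da : domD mu a by apply: dab; rewrite ge_min le_max lexx.
have db : domD mu b by apply: dab; rewrite ge_min le_max lexx !orbT.
have [ba bb] := (ess_bounded_tfrac da, ess_bounded_tfrac db).
have bab := ess_boundedM ba bb; have abab := ess_boundedZ a bab.
rewrite -RintegralZl_ess_bounded // -RintegralB_ess_bounded //.
apply: Rintegral_ge0_ae; first exact: (ess_boundedB bb abab).1.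
apply: filterS (ae_supp mu) => t st.
rewrite tfrac_cross ?(domD_denom_neq0 da st) ?(domD_denom_neq0 db st) //.
rewrite divr_ge0 ?(supp_ge0 neg0 st) // ltW // affine_mul_gt0 // => d hd.
exact: domD_denom_neq0 (dab d hd) st.
Qed.

Lemma integral_tfrac_div a x : ess_bounded mu (tfrac a) ->
  (\int[mu]_t (t / (- x * (1 + a * t)))%:E =
   ((- x)^-1 * \int[mu]_t tfrac a t)%:E)%E.
Proof.
(* no side condition: invfM also holds where 1 + a t = 0, as 0^-1 = 0 *)
move=> ba; have kba := ess_boundedZ (- x)^-1 ba.
rewrite -RintegralZl_ess_bounded // -integral_EFin_ess_bounded //.
by apply: eq_integral => t _; rewrite /tfrac invfM mulrCA.
Qed.

Lemma integral_tfrac_sqr_div a x : ess_bounded mu (tfrac a) ->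
  (\int[mu]_t (t ^+ 2 / (x ^+ 2 * (1 + a * t) ^+ 2))%:E =
   ((x ^+ 2)^-1 * \int[mu]_t (tfrac a t ^+ 2))%:E)%E.
Proof.
move=> /ess_bounded_sqr ba; have kba := ess_boundedZ (x ^+ 2)^-1 ba.
rewrite -RintegralZl_ess_bounded // -integral_EFin_ess_bounded //.
by apply: eq_integral => t _; rewrite /tfrac invfM exprMn exprVn mulrCA.
Qed.

End tfrac_integrals.

Lemma admissibleE (R : realType) (c : R) (nu nut : probability R R) td d x :
  admissible c nu nut td d x ->
  [/\ domD nu td, domD nut d, x * d = - (c * \int[nu]_t tfrac td t),
      x * td = - \int[nut]_t tfrac d t &
      c * \int[nu]_t (tfrac td t ^+ 2) * \int[nut]_t (tfrac d t ^+ 2) < x ^+ 2].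
Proof.
move=> [[dnu x0] [ed dnut] etd stab].
have [bnu bnut] := (ess_bounded_tfrac dnu, ess_bounded_tfrac dnut).
rewrite integral_tfrac_div // -EFinM in ed; have {}ed := EFin_inj ed.
rewrite integral_tfrac_div // in etd; have {}etd := EFin_inj etd.
rewrite !integral_tfrac_sqr_div // -!EFinM -EFinB lte_fin in stab.
split => //; [by rewrite ed; field|by rewrite etd; field|].
rewrite -subr_gt0; move: stab; set A := \int[nu]_t _; set B := \int[nut]_t _.
have -> : x ^+ 2 - c * A * B =
    x ^+ 2 * (1 - x ^+ 2 * (c * ((x ^+ 2)^-1 * A) * ((x ^+ 2)^-1 * B))).
  by field.
by move=> stab; rewrite mulr_gt0 // exprn_even_gt0.
Qed.

Theorem lemma3p9 (R : realType) (c : R) (nu nut : probability R R)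
  (td1 td2 d1 d2 x1 x2 : R) :
  0 < c ->
  nu [set t : R | t < 0] = 0%E ->
  nut [set t : R | t < 0] = 0%E ->
  (nu : set R -> \bar R) <> \d_(0 : R) ->
  (nut : set R -> \bar R) <> \d_(0 : R) ->
  admissible c nu nut td1 d1 x1 ->
  admissible c nu nut td2 d2 x2 ->
  td1 < td2 ->
  0 < x1 * x2 ->
  (forall d : R, Num.min d1 d2 <= d <= Num.max d1 d2 -> domD nut d) ->
  x1 < x2.
Proof.
move=> c0 _ nut_ge0 _ _ /admissibleE[dnu1 dnut1 e1 f1 s1]
  /admissibleE[dnu2 dnut2 e2 f2 s2] td12 x12 dnut12.
have key := fixed_point_cross_identity e1 e2 f1 f2
  (Rintegral_tfrac_resolvent dnu1 dnu2) (Rintegral_tfrac_resolvent dnut1 dnut2).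
have cross := cross_term_lt c0 (Rintegral_sqr_ge0 _ _) (Rintegral_sqr_ge0 _ _)
  (Rintegral_sqr_ge0 _ _) (Rintegral_sqr_ge0 _ _)
  (Rintegral_CauchySchwarz (ess_bounded_tfrac dnu1) (ess_bounded_tfrac dnu2))
  (Rintegral_CauchySchwarz (ess_bounded_tfrac dnut1) (ess_bounded_tfrac dnut2))
  s1 s2 x12.
have C_ge0 := Rintegral_tfrac_cross_ge0 nut_ge0 dnut12.
have : 0 < (x2 - x1) *
    (\int[nut]_t tfrac d2 t - d1 * \int[nut]_t (tfrac d1 t * tfrac d2 t)).
  by rewrite key mulr_gt0 // subr_gt0.
nra.
Qed.
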